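(* Let $F$ be a violating edge set and let $(\mathcal{T},\mathcal{M},y)$ be a tree embedding of $(G,\tilde x)$ that is good for $F$. Then $|Z_F|\le 2^{2(p+q)\beta}k$.
   Context: Setting: $G=(V,E)$ is an undirected graph with edges partitioned into safe and unsafe edges; $p,q$ are nonnegative integers with $p+q\ge1$; $(s_i,t_i)$, $i\in[k]$, are terminal pairs; $H\subseteq E$ is such that every pair is $(p,q)$-flex-connected in $H$ (every cut $\delta_H(S)$ separating $s_i$ from $t_i$ has at least $p$ safe edges or at least $p+q$ edges). A violating edge set is $F=\delta_H(S)$ for some $S$ separating some pair with $|\delta_H(S)|=p+q$ and at most $p-1$ safe edges. Let $\beta\ge1$ and let $\tilde x:E\to\mathbb{R}_{>0}$ be capacities with $\tilde x_e=\frac{1}{4(p+q)\beta}$ for every $e\in H$. A tree embedding of $(G,\tilde x)$ is a tree $\mathcal{T}$ with $\mathcal{M}_1:V(\mathcal{T})\to V$ restricting to a bijection between leaves and $V$ (vertices identified with leaves), and $\mathcal{M}_2$ mapping each tree edge $(a,b)$ to a path in $G$ between $\mathcal{M}_1(a),\mathcal{M}_1(b)$; capacities $y(f)=\tilde x(\delta_G(A'))$ with $A'$ the vertex set of leaves in one component of $\mathcal{T}-f$; $\mathcal{M}^{-1}(F)=\{f:\mathcal{M}_2(f)\cap F\neq\emptyset\}$; good for $F$ means $y(\mathcal{M}^{-1}(F))\le\frac12$. $\mathcal{Q}_F$ is the set of components of $(V,H\setminus F)$; $Q_{s_i},Q_{t_i}$ contain $s_i,t_i$; $Q\in\mathcal{Q}_F$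 is shattered if its leaves are not all in one component of $\mathcal{T}-\mathcal{M}^{-1}(F)$; disjoint $A,B\subseteq V$ partition the shattered components if each shattered component lies in $A$ or in $B$; $Z_F=\{(A\cup Q_{s_i},B\cup Q_{t_i}):(A,B)\text{ partitions the shattered components},i\in[k]\}$. *)

From HB Require Import structures.
From mathcomp Require Import all_boot all_order all_algebra.
From mathcomp Require Import reals exp.
Set Implicit Arguments. Unset Strict Implicit. Unset Printing Implicit Defensive.
Import Order.TTheory GRing.Theory Num.Theory.
Local Open Scope ring_scope.

Section Graphs.
Variables (V E : finType) (ends : E -> V * V).

Definition joins (e : E) (u v : V) : bool :=
  (ends e == (u, v)) || (ends e == (v, u)).

Definition adjX (X : {set E}) : rel V := fun u v => [exists e in X, joins e u v].

Definition cut (X : {set E}) (S : {set V}) : {set E} :=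
  [set e in X | ((ends e).1 \in S) != ((ends e).2 \in S)].

Fixpoint walk (u : V) (s : seq E) (v : V) : bool :=
  match s with
  | [::] => u == v
  | e :: s' => ((ends e).1 == u) && walk (ends e).2 s' v
               || ((ends e).2 == u) && walk (ends e).1 s' v
  end.

Definition compX (X : {set E}) (v : V) : {set V} := [set u | connect (adjX X) v u].

Definition connected_graph : bool :=
  (0 < #|V|)%N && [forall u, forall v, connect (adjX setT) u v].

Definition is_tree : bool := connected_graph && (#|E|.+1 == #|V|)%N.

(* degree (no loops in a tree) *)
Definition degree (v : V) : nat := #|[set e | ((ends e).1 == v) || ((ends e).2 == v)]|.

(* leaves of a tree (degree <= 1, so that a one-node tree is its own leaf) *)
Definition is_leaf (v : V) : bool := (degree v <= 1)%N.

End Graphs.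

Section Setting.
Variables (V E : finType) (ends : E -> V * V) (safe : pred E)
          (p q k : nat) (s t : 'I_k -> V) (H : {set E}).

Definition separates (S : {set V}) (i : 'I_k) : bool := (s i \in S) != (t i \in S).

Definition nsafe (X : {set E}) : nat := #|[set e in X | safe e]|.

Definition flex_connected : Prop :=
  forall (i : 'I_k) (S : {set V}), separates S i ->
    (p <= nsafe (cut ends H S))%N \/ (p + q <= #|cut ends H S|)%N.

Definition violating (F : {set E}) : Prop :=
  exists (S : {set V}) (i : 'I_k),
    [/\ separates S i, F = cut ends H S, #|cut ends H S| = (p + q)%N
      & (nsafe (cut ends H S) < p)%N].
End Setting.

Section TreeEmbedding.
Variables (R : realType) (V E : finType) (ends : E -> V * V) (x : E -> R).
Variables (N TE : finType) (tends : TE -> N * N) (M1 : N -> V) (M2 : TE -> seq E).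

Definition tree_embedding : Prop :=
  [/\ is_tree tends,
      {in is_leaf tends &, injective M1},
      (forall v : V, exists2 a, is_leaf tends a & M1 a = v)
    & forall f : TE, walk ends (M1 (tends f).1) (M2 f) (M1 (tends f).2)].

Definition tconn (X : {set TE}) : rel N := connect (adjX tends (~: X)).

Definition side (f : TE) : {set V} :=
  [set v | [exists a, [&& is_leaf tends a, M1 a == v & tconn [set f] (tends f).1 a]]].

Definition ycap (f : TE) : R := \sum_(e in cut ends setT (side f)) x e.

Definition Minv (F : {set E}) : {set TE} := [set f | has (fun e => e \in F) (M2 f)].

Definition good_for (F : {set E}) : Prop := \sum_(f in Minv F) ycap f <= 2^-1.

Definition shattered (F : {set E}) (Q : {set V}) : bool :=
  ~~ [forall a, forall b,
        [&& is_leaf tends a, is_leaf tends b, M1 a \in Q & M1 b \in Q]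
          ==> tconn (Minv F) a b].

Variables (H : {set E}) (k : nat) (s t : 'I_k -> V).

Definition QF (F : {set E}) (v : V) : {set V} := compX ends (H :\: F) v.

Definition partitions_shattered (F : {set E}) (A B : {set V}) : bool :=
  [&& [disjoint A & B],
      [forall v, shattered F (QF F v) ==> ((QF F v \subset A) || (QF F v \subset B))]
    & [forall v, (v \in A :|: B) ==> shattered F (QF F v)]].

Definition ZF (F : {set E}) : {set {set V} * {set V}} :=
  [set X | [exists A : {set V}, exists B : {set V}, exists i : 'I_k,
     partitions_shattered F A B && (X == (A :|: QF F (s i), B :|: QF F (t i)))]].
End TreeEmbedding.

(* Choosing an element of Z_F amounts to choosing the index i and which shattered
   components go to A, so |Z_F| <= 2^m k where m is the number of shattered components.
   A component Q of H \ F is shattered only if some tree edge f in M^{-1}(F) separates two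
   leaves of Q; as Q is connected in H \ F, some edge e of H \ F joins the two sides of
   T - f, so e lies in delta_H(A'_f) and Q is the component of an endpoint of e.  Each such
   pair (f, e) contributes x_e = 1/(4(p+q)beta) to y(f), so goodness yields
   m / (4(p+q)beta) <= 1/2, i.e. m <= 2(p+q)beta. *)

From HB Require Import structures.
From mathcomp Require Import all_boot all_order all_algebra.
From mathcomp Require Import reals exp.
From mathcomp Require Import zify lra.
Import Order.TTheory GRing.Theory Num.Theory.
Set Implicit Arguments. Unset Strict Implicit. Unset Printing Implicit Defensive.

Section Connectivity.
Variables (V E : finType) (ends : E -> V * V).
Implicit Types (X Y : {set E}) (S : {set V}).
Local Notation conn X := (connect (adjX ends X)).

Lemma adjX_sym X : symmetric (adjX ends X).
Proof.
move=> u v; apply/existsP/existsP => -[e /andP[eX uv]]; exists e;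
  by rewrite eX /joins orbC.
Qed.

Lemma connect_adjX_sym X : connect_sym (adjX ends X).
Proof. exact/sym_connect_sym/adjX_sym. Qed.

Lemma connect_adjX_sub X Y : X \subset Y -> subrel (conn X) (conn Y).
Proof.
move=> sXY a b; apply: connect_sub => u v /existsP[e /andP[eX uv]].
by apply/connect1/existsP; exists e; rewrite (subsetP sXY).
Qed.

Lemma eq_compX X a b : conn X a b -> compX ends X a = compX ends X b.
Proof.
move=> ab; apply/setP => z; rewrite !inE; apply/idP/idP; last exact: connect_trans.
by apply: connect_trans; rewrite connect_adjX_sym.
Qed.

Lemma connect_adjX_setU1 X f a b : conn (f |: X) a b ->
  conn X a b \/ (conn X a (ends f).1 || conn X a (ends f).2)
                && (conn X (ends f).1 b || conn X (ends f).2 b).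
Proof.
case/connectP => pth; elim: pth a => [|c pth IH] a /=; first by move=> _ ->; left.
case/andP => /existsP[e /andP[]]; rewrite !inE => /orP[/eqP ->{e}|eX] ac.
  move/(IH c) => /[apply]; move: ac; rewrite /joins; case: (ends f) => u w /=.
  by case/orP => /eqP[-> ->] [cb | /andP[_ ->]]; right; rewrite ?cb connect0 ?orbT.
have {}ac : conn X a c by apply/connect1/existsP; exists e; rewrite eX.
move/(IH c) => /[apply] -[cb | /andP[cfb ->]]; first by left; apply: connect_trans ac cb.
by right; case/orP: cfb => cf; rewrite (connect_trans ac cf) ?orbT.
Qed.

Lemma connect_cut X S c d : conn X c d -> c \in S -> d \notin S ->
  exists2 e, e \in cut ends X S & conn X c (ends e).1.
Proof.
case/connectP => pth; elim: pth c => [|c' pth IH] c /=; first by move=> _ -> ->.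
case/andP => cc' /IH {}IH /IH {}IH cS dS.
case c'S: (c' \in S).
  by have [e eX c'e] := IH c'S dS; exists e => //; apply: connect_trans (connect1 cc') c'e.
case/existsP: cc' (cc') => e /andP[eX] /orP[] /eqP ends_e cc'; exists e;
  by rewrite ?inE ?eX ends_e /= ?cS ?c'S ?connect0 ?(connect1 cc').
Qed.

Lemma cutS X Y S : X \subset Y -> cut ends X S \subset cut ends Y S.
Proof. by move=> sXY; apply/subsetP => e; rewrite !inE => /andP[/(subsetP sXY) -> ->]. Qed.

Definition components X : {set {set V}} := [set compX ends X v | v in V].

Lemma compX0 v : compX ends set0 v = [set v].
Proof.
apply/setP => z; rewrite !inE; apply/idP/eqP => [|->]; last exact: connect0.
by case/connectP => -[|c pth] /=; [move=> _ -> | case/andP => /existsP[e]; rewrite inE].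
Qed.

Lemma card_components_setU1 X f :
  (#|components X| <= #|components (f |: X)| + 1)%N.
Proof.
set u := (ends f).1; set w := (ends f).2; set P := [set compX ends X u; compX ends X w].
have kept : components X :\: P \subset components (f |: X).
  apply/subsetP => _ /setDP[/imsetP[v _ ->]]; rewrite !inE => /norP[nu nw].
  have [vu | nvu] := boolP (conn X v u); first by rewrite (eq_compX vu) eqxx in nu.
  have [vw | nvw] := boolP (conn X v w); first by rewrite (eq_compX vw) eqxx in nw.
  suff -> : compX ends X v = compX ends (f |: X) v by apply: imset_f.
  apply/setP => z; rewrite !inE; apply/idP/idP; first exact/connect_adjX_sub/subsetUr.
  by case/connect_adjX_setU1 => // /andP[/orP[] ? _]; [case/negP: nvu | case/negP: nvw].
have fresh : compX ends (f |: X) u \notin components X :\: P.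
  apply/setDP => -[/imsetP[v _ eq_uv]]; apply/negP.
  have : u \in compX ends X v by rewrite -eq_uv inE connect0.
  by rewrite eq_uv inE => /eq_compX ->; rewrite !inE eqxx.
have : compX ends (f |: X) u |: (components X :\: P) \subset components (f |: X).
  by rewrite subUset sub1set imset_f.
move/subset_leq_card.
have : (#|components X| <= #|components X :\: P| + 2)%N.
  rewrite -(cardsID P) addnC leq_add2l.
  by apply: leq_trans (subset_leq_card (subsetIr _ _)) _; rewrite cards2; case: (_ != _).
rewrite cardsU1 (negPf fresh) add1n => le_cardD lt_cardD.
by apply: leq_trans le_cardD _; rewrite addn2 addn1 ltnS.
Qed.

Lemma card_components_ge X : (#|V| <= #|X| + #|components X|)%N.
Proof.
elim: {X}_.+1 {-2}X (ltnSn #|X|) => // n IH X.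
case: (set_0Vmem X) => [-> _ | [f fX]].
  rewrite cards0 /components (eq_imset _ compX0) card_imset //; exact: set1_inj.
rewrite (cardsD1 f X) fX ltnS => /IH.
by have := card_components_setU1 (X :\ f) f; rewrite setD1K //; lia.
Qed.

Section Tree.
Hypothesis tree : is_tree ends.

Lemma tree_connect a b : conn [set: E] a b.
Proof. by case/andP: tree => /andP[_ /forallP/(_ a)/forallP]. Qed.

Lemma tree_bridge f : ~~ conn (~: [set f]) (ends f).1 (ends f).2.
Proof.
case/andP: tree => _ /eqP card_E; apply/negP => uw; set X := ~: [set f].
have wu : conn X (ends f).2 (ends f).1 by rewrite connect_adjX_sym.
have conn_X a b : conn X a b.
  have : conn (f |: X) a b by rewrite setUCr; apply: tree_connect.
  case/connect_adjX_setU1 => // /andP[/orP[] au /orP[] ub];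
    by do ![apply: connect_trans; first eassumption].
have : (#|components X| <= 1)%N.
  rewrite -(cards1 (compX ends X (ends f).1)); apply/subset_leq_card/subsetP.
  by move=> _ /imsetP[v _ ->]; rewrite inE (eq_compX (conn_X v (ends f).1)).
have := card_components_ge X; have : (0 < #|E|)%N by apply/card_gt0P; exists f.
by rewrite /X cardsC1; lia.
Qed.

Lemma tree_bridge_separates X f a b : f \notin X ->
  conn (f |: X) a b -> ~~ conn X a b ->
  conn (~: [set f]) (ends f).1 a != conn (~: [set f]) (ends f).1 b.
Proof.
move=> fX ab nab; have sX : X \subset ~: [set f] by rewrite subsetC sub1set inE.
have side1 z : conn X z (ends f).1 -> conn (~: [set f]) (ends f).1 z.
  by rewrite connect_adjX_sym; apply: connect_adjX_sub.
have side2 z : conn X z (ends f).2 -> ~~ conn (~: [set f]) (ends f).1 z.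
  move=> zw; apply: contra (tree_bridge f) => uz.
  exact: connect_trans uz (connect_adjX_sub sX zw).
case/connect_adjX_setU1: ab => [ab | /andP[/orP[] az /orP[] zb]].
- by rewrite ab in nab.
- by rewrite (connect_trans az zb) in nab.
- by rewrite side1 // (negPf (side2 _ _)) // connect_adjX_sym.
- by rewrite (negPf (side2 _ az)) side1 // connect_adjX_sym.
- by rewrite (connect_trans az zb) in nab.
Qed.

Lemma tree_separating_edge Y a b : ~~ conn (~: Y) a b ->
  exists2 f, f \in Y & conn (~: [set f]) (ends f).1 a != conn (~: [set f]) (ends f).1 b.
Proof.
elim: {Y}_.+1 {-2}Y (ltnSn #|Y|) => // n IH Y ltYn nab.
case: (set_0Vmem Y) => [Y0 | [f fY]]; first by rewrite Y0 setC0 tree_connect in nab.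
have [ab | nab'] := boolP (conn (~: (Y :\ f)) a b); last first.
  have [|g gY sep] := IH (Y :\ f) _ nab'; first by rewrite (cardsD1 f Y) fY in ltYn.
  by exists g => //; apply: (subsetP (subD1set Y f)).
exists f => //; apply: tree_bridge_separates nab; first by rewrite inE fY.
by rewrite setUC -setCD.
Qed.

End Tree.

End Connectivity.

Local Open Scope ring_scope.

Lemma ler_sum_subset (R : numDomainType) (I : finType) (A B : {set I}) (G : I -> R) :
  A \subset B -> (forall i, i \in B -> 0 <= G i) ->
  \sum_(i in A) G i <= \sum_(i in B) G i.
Proof.
move=> sAB G_ge0; rewrite [leRHS](big_setID A) /= (setIidPr sAB) lerDl.
by apply: sumr_ge0 => i /setDP[/G_ge0].
Qed.

Lemma exp2_le_powR (R : realType) (m : nat) (r : R) :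
  m%:R <= r -> (2 ^ m)%:R <= powR 2 r.
Proof. by move=> mr; rewrite natrX -powR_mulrn ?ler0n // ler_powR // ler1n. Qed.

Section Embedding.
Variables (V E N TE : finType) (ends : E -> V * V) (tends : TE -> N * N)
  (M1 : N -> V) (M2 : TE -> seq E) (H F : {set E}).

Definition shattered_comps : {set {set V}} :=
  [set Q in components ends (H :\: F) | shattered tends M1 M2 F Q].

Definition crossing_pairs : {set TE * E} :=
  [set fe | (fe.1 \in Minv M2 F) && (fe.2 \in cut ends H (side tends M1 fe.1))].

Lemma mem_QF v : v \in QF ends H F v.
Proof. by rewrite inE connect0. Qed.

Lemma partitions_shattered_bigcup A B :
  partitions_shattered ends tends M1 M2 H F A B ->
  exists2 P : {set {set V}}, P \subset shattered_comps &
    A = \bigcup_(C in P) C /\ B = \bigcup_(C in shattered_comps :\: P) C.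
Proof.
case/and3P => dAB /forallP AorB /forallP AB_sh.
have sh v : v \in A :|: B -> shattered tends M1 M2 F (QF ends H F v) := implyP (AB_sh v).
have AorB' v : v \in A :|: B -> (QF ends H F v \subset A) || (QF ends H F v \subset B).
  by move=> vAB; apply: implyP (AorB v) (sh v vAB).
have QA v : v \in A -> QF ends H F v \subset A.
  move=> vA; have := AorB' v; rewrite inE vA => /(_ isT).
  by case/orP => // /subsetP/(_ v (mem_QF v)); rewrite (disjointFr dAB vA).
have QB v : v \in B -> QF ends H F v \subset B.
  move=> vB; have := AorB' v; rewrite inE vB orbT => /(_ isT).
  by case/orP => // /subsetP/(_ v (mem_QF v)) vA; rewrite (disjointFr dAB vA) in vB.
have QSC v : v \in A :|: B -> QF ends H F v \in shattered_comps.
  by move=> vAB; rewrite inE sh // andbT; apply: imset_f.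
exists [set C in shattered_comps | C \subset A].
  by apply/subsetP => C; rewrite inE => /andP[].
split; apply/setP => v; apply/idP/bigcupP.
- move=> vA; exists (QF ends H F v); rewrite ?mem_QF //.
  by apply/setIdP; rewrite QA ?QSC // inE vA.
- by case=> C; rewrite inE => /andP[_ /subsetP]; apply.
- move=> vB; exists (QF ends H F v); rewrite ?mem_QF //.
  apply/setDP; split; first by rewrite QSC // inE vB orbT.
  apply/setIdP => -[_ /subsetP/(_ v (mem_QF v)) vA].
  by rewrite (disjointFr dAB vA) in vB.
- case=> C /setDP[CSC CnP] vC; case/setIdP: (CSC) => /imsetP[w _ eC] shw; subst C.
  case/orP: (implyP (AorB w) shw) => [QwA | /subsetP/(_ v vC) //].
  by case/negP: CnP; apply/setIdP.
Qed.

Lemma card_ZF_le k (s t : 'I_k -> V) :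
  (#|ZF ends tends M1 M2 H s t F| <= 2 ^ #|shattered_comps| * k)%N.
Proof.
pose g (Pi : {set {set V}} * 'I_k) :=
  ((\bigcup_(C in Pi.1) C) :|: QF ends H F (s Pi.2),
   (\bigcup_(C in shattered_comps :\: Pi.1) C) :|: QF ends H F (t Pi.2)).
have : ZF ends tends M1 M2 H s t F \subset g @: setX (powerset shattered_comps) setT.
  apply/subsetP => X; rewrite inE => /existsP[A /existsP[B /existsP[i /andP[]]]].
  case/partitions_shattered_bigcup => P sP [-> ->] /eqP ->.
  by apply/imsetP; exists (P, i) => //; rewrite !inE sP.
move/subset_leq_card/leq_trans; apply; apply: leq_trans (leq_imset_card _ _) _.
by rewrite cardsX card_powerset cardsT card_ord.
Qed.

Section EmbeddedTree.
Hypotheses (tree : is_tree tends) (leaf_inj : {in is_leaf tends &, injective M1}).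

Lemma mem_side f a : is_leaf tends a ->
  (M1 a \in side tends M1 f) = connect (adjX tends (~: [set f])) (tends f).1 a.
Proof.
move=> la; rewrite inE; apply/existsP/idP => [[b /and3P[lb /eqP/leaf_inj <- //]] | fa].
by exists a; rewrite la eqxx.
Qed.

Lemma shattered_crossing_pair v : shattered tends M1 M2 F (QF ends H F v) ->
  exists2 fe, fe \in crossing_pairs & QF ends H F v = QF ends H F (ends fe.2).1.
Proof.
case/forallPn => a /forallPn[b]; rewrite negb_imply => /andP[/and4P[la lb aQ bQ] nab].
have [f fF] := tree_separating_edge tree nab; rewrite -(mem_side f la) -(mem_side f lb).
have crossing c d : c \in QF ends H F v -> d \in QF ends H F v ->
    c \in side tends M1 f -> d \notin side tends M1 f ->
    exists2 fe, fe \in crossing_pairs & QF ends H F v = QF ends H F (ends fe.2).1.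
  move=> + + cS dS; rewrite !inE => vc vd.
  have cd : connect (adjX ends (H :\: F)) c d.
    by apply: connect_trans vd; rewrite connect_adjX_sym.
  have [e eX ce] := connect_cut cd cS dS.
  exists (f, e); first by rewrite inE fF (subsetP (cutS ends _ (subsetDl H F)) _ eX).
  exact/eq_compX/(connect_trans vc ce).
move=> sep; have [aS | naS] := boolP (M1 a \in side tends M1 f).
- by apply: (crossing (M1 a) (M1 b)) => //; move: sep; rewrite aS; case: (_ \in _).
- by apply: (crossing (M1 b) (M1 a)) => //; move: sep; rewrite (negPf naS); case: (_ \in _).
Qed.

Lemma card_shattered_comps_le : (#|shattered_comps| <= #|crossing_pairs|)%N.
Proof.
have : shattered_comps \subset [set QF ends H F (ends fe.2).1 | fe in crossing_pairs].
  apply/subsetP => Q /setIdP[/imsetP[v _ ->] sh].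
  have [fe fe_cross eQ] := shattered_crossing_pair sh.
  by rewrite -[compX _ _ v]/(QF ends H F v) eQ; apply: imset_f.
by move/subset_leq_card/leq_trans; apply; apply: leq_imset_card.
Qed.

End EmbeddedTree.

Lemma card_crossing_pairs_le (R : realType) (x : E -> R) (c : R) :
  (forall e, 0 <= x e) -> (forall e, e \in H -> x e = c) ->
  #|crossing_pairs|%:R * c <= \sum_(f in Minv M2 F) ycap ends x tends M1 f.
Proof.
move=> x_ge0 xH; have -> : #|crossing_pairs|%:R * c =
    \sum_(f in Minv M2 F) \sum_(e in cut ends H (side tends M1 f)) x e.
  rewrite pair_big_dep mulr_natl -sumr_const; apply: eq_big => -[f e]; rewrite !inE //.
  by case/andP => _ /andP[/xH].
apply: ler_sum => f _; apply: ler_sum_subset => [|e _]; last exact: x_ge0.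
exact/cutS/subsetT.
Qed.

End Embedding.

Theorem lemma4p5 (R : realType) (V E : finType) (ends : E -> V * V) (safe : pred E)
  (p q k : nat) (s t : 'I_k -> V) (H : {set E}) (beta : R) (x : E -> R)
  (N TE : finType) (tends : TE -> N * N) (M1 : N -> V) (M2 : TE -> seq E)
  (F : {set E}) :
  (1 <= p + q)%N ->
  flex_connected ends safe p q s t H ->
  1 <= beta ->
  (forall e, 0 < x e) ->
  (forall e, e \in H -> x e = (4 * (p + q)%:R * beta)^-1) ->
  violating ends safe p q s t H F ->
  tree_embedding ends tends M1 M2 ->
  good_for ends x tends M1 M2 F ->
  (#|ZF ends tends M1 M2 H s t F|)%:R
    <= powR 2 (2 * (p + q)%:R * beta) * k%:R.
Proof.
move=> pq_gt0 _ beta_ge1 x_gt0 xH _ [tree leaf_inj _ _] good.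
set D := 4 * (p + q)%:R * beta.
have D_gt0 : 0 < D by rewrite !mulr_gt0 ?ltr0n // (lt_le_trans ltr01).
have pairs_le : #|crossing_pairs ends tends M1 M2 H F|%:R / D <= 2^-1.
  exact: le_trans (card_crossing_pairs_le ends tends M1 M2 F (fun e => ltW (x_gt0 e)) xH) good.
have m_le : #|shattered_comps ends tends M1 M2 H F|%:R <= 2 * (p + q)%:R * beta.
  apply: le_trans (_ : #|crossing_pairs ends tends M1 M2 H F|%:R <= _).
    by rewrite ler_nat card_shattered_comps_le.
  by move: pairs_le; rewrite ler_pdivrMr // /D -!mulrA; set y := _ * beta; lra.
apply: le_trans (_ : (2 ^ #|shattered_comps ends tends M1 M2 H F| * k)%:R <= _).
  by rewrite ler_nat card_ZF_le.
by rewrite natrM ler_wpM2r // exp2_le_powR.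
Qed.
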